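(* Consider Variant 1 of the generalized one-way trading problem under Assumption A, with $0<L<U$. Let $\alpha>1$ be the solution of $\alpha=\ln\frac{U-L}{\alpha L-L}$ and define $\phi^*(w)=L+(U-L)e^{\frac{\alpha}{C}w-\alpha}$ for $w\in[0,C]$ and $\phi^*(w)=+\infty$ for $w>C$. Then the competitive ratio of $\mathsf{OTA}_{\phi^*}$ for Variant 1 is $\alpha$.
   Context: Variant 1: a single knapsack of capacity $C$; items $n=1,\dots,N$ arrive one at a time; item $n$ has size $D_n>0$ and value function $g_n:[0,D_n]\to\mathbb R_{\ge0}$, revealed on arrival. Any remaining capacity at the end is filled at the lowest marginal value $L$: the offline problem is $\max\sum_n g_n(y_n)+(C-\sum_n y_n)L$ s.t. $\sum_n y_n\le C$, $0\le y_n\le D_n$, and an online algorithm choosing $y_1,\dots,y_N$ earns $\sum_n g_n(y_n)+(C-\sum_n y_n)L$. Assumption A: each $g_n$ is non-decreasing, differentiable, concave, $g_n(0)=0$, $L\le g_n'\le U$, with $C,L,U$ known. An online algorithm irrevocably chooses $y_n$ on arrival using only items $1,\dots,n$ and $C,L,U$; competitive ratio is $\sup_{\mathcal I}\mathrm{OPT}/\mathrm{ALG}$ over instances satisfying Assumption A. $\mathsf{OTA}_\phi$: start with $w^{(1)}=0$; upon arrival of item $n$ choose $y_n^*\in\arg\max_{0\le y\le D_n} g_n(y)-\int_{w^{(n)}}^{w^{(n)}+y}\phi(u)du$ and set $w^{(n+1)}=w^{(n)}+y_n^*$. *)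

From Stdlib Require Import Reals Lra.
From Coquelicot Require Import Coquelicot.
Open Scope R_scope.

Fixpoint psum (f : nat -> R) (n : nat) : R :=
  match n with
  | O => 0
  | S k => psum f k + f k
  end.

(* Assumption A for a single value function g on [0, D]:
   non-decreasing, differentiable, concave, g(0)=0, L <= g' <= U.
   g is given as a function R -> R; only its behaviour on [0,D] matters. *)
Definition assumptionA_fun (L U D : R) (g : R -> R) : Prop :=
  g 0 = 0 /\
  (forall x y, 0 <= x -> x <= y -> y <= D -> g x <= g y) /\
  (forall x y t, 0 <= x <= D -> 0 <= y <= D -> 0 <= t <= 1 ->
     t * g x + (1 - t) * g y <= g (t * x + (1 - t) * y)) /\
  (forall x, 0 <= x <= D -> ex_derive g x /\ L <= Derive g x <= U).

Definition valid_instance (L U : R) (N : nat) (D : nat -> R) (g : nat -> R -> R)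
  : Prop :=
  forall n, (n < N)%nat -> 0 < D n /\ assumptionA_fun L U (D n) (g n).

(* Objective value of a decision vector y (items 0..N-1): filled leftover
   capacity is valued at L. *)
Definition payoff (C L : R) (N : nat) (g : nat -> R -> R) (y : nat -> R) : R :=
  psum (fun n => g n (y n)) N + (C - psum y N) * L.

Definition feasible (C : R) (N : nat) (D : nat -> R) (y : nat -> R) : Prop :=
  psum y N <= C /\ forall n, (n < N)%nat -> 0 <= y n <= D n.

(* The threshold function phi* on [0, C] (it is +infinity for w > C). *)
Definition phi_star (C L U alpha : R) (w : R) : R :=
  L + (U - L) * exp (alpha / C * w - alpha).

(* Since phi*(u) = +infinity for u > C, any y with w + y > C has objective
   -infinity (while y = 0 has objective 0), so the argmax is taken over
   0 <= y <= D n with w + y <= C, where the integrand is the finite phi*. *)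
Definition ota_run (C L U alpha : R) (N : nat) (D : nat -> R)
  (g : nat -> R -> R) (y : nat -> R) : Prop :=
  forall n, (n < N)%nat ->
    let w := psum y n in
    (0 <= y n <= D n /\ w + y n <= C) /\
    forall z, 0 <= z <= D n -> w + z <= C ->
      g n z - RInt (phi_star C L U alpha) w (w + z)
      <= g n (y n) - RInt (phi_star C L U alpha) w (w + y n).

(* "The competitive ratio of OTA_phi* for Variant 1 is r":
   sup over instances (satisfying Assumption A) of OPT / ALG equals r, i.e.
   (i) on every instance, every run of the algorithm and every feasible offline
       solution x:  payoff x <= r * ALG   (so OPT <= r * ALG), and
   (ii) for every beta < r there is an instance on which (the algorithm has a
       run and) every run of the algorithm satisfies beta * ALG < OPT. *)
Definition ota_competitive_ratio_is (C L U alpha r : R) : Prop :=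
  (forall N D g y x,
      valid_instance L U N D g ->
      ota_run C L U alpha N D g y ->
      feasible C N D x ->
      payoff C L N g x <= r * payoff C L N g y) /\
  (forall beta, beta < r ->
     exists N D g,
       valid_instance L U N D g /\
       (exists y, ota_run C L U alpha N D g y) /\
       forall y, ota_run C L U alpha N D g y ->
         exists x, feasible C N D x /\
           beta * payoff C L N g y < payoff C L N g x).

From Stdlib Require Import Reals Lra Lia.
From Coquelicot Require Import Coquelicot.
Open Scope R_scope.

(* Let W be the capacity filled by the algorithm.  Priced at the final
   threshold phi*(W), every offline choice z of an item is beaten by the online
   choice y made at utilisation w: g(z) - phi*(W) z <= g(y) - int_w^{w+y} phi*.
   For z > y this is because, by concavity and the first-order optimality of y,
   the extra value g(z) - g(y) is at most phi*(w + y) (z - y).  Summing over the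
   items, OPT <= ALG - int_0^W phi* + phi*(W) C - (C - W) L, and phi* is exactly
   the solution of C phi*(W) = alpha (int_0^W phi* + (C - W) L), which turns
   this into OPT <= alpha ALG because int_0^W phi* + (C - W) L <= ALG (no
   online choice is worse than buying nothing).  Conversely, on a single
   linear item of slope phi*(0) = alpha L the algorithm buys nothing while the
   optimum fills the knapsack, so the ratio alpha is attained. *)

Lemma continuous_ge_of_right (f : R -> R) (x A eps : R) :
  continuous f x -> 0 < eps ->
  (forall t, 0 < t <= eps -> A <= f (x + t)) -> A <= f x.
Proof.
  intros Hf Heps Hright.
  apply Rnot_lt_le; intros Hlt.
  assert (Hgap : 0 < A - f x) by lra.
  destruct (proj1 (filterlim_locally f (f x)) Hf (mkposreal _ Hgap)) as [delta Hdelta].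
  pose proof (cond_pos delta).
  set (t := Rmin eps (delta / 2)).
  assert (Ht : 0 < t <= eps) by (split; [apply Rmin_glb_lt | apply Rmin_l]; lra).
  assert (Hball : Rabs (x + t - x) < delta).
  { replace (x + t - x) with t by ring. rewrite Rabs_pos_eq by lra.
    pose proof (Rmin_r eps (delta / 2)) as Hr; fold t in Hr. lra. }
  specialize (Hdelta _ Hball). change (Rabs (f (x + t) - f x) < A - f x) in Hdelta.
  apply Rabs_def2 in Hdelta. specialize (Hright t Ht). lra.
Qed.

Lemma psum_le (f g : nat -> R) (N : nat) :
  (forall n, (n < N)%nat -> f n <= g n) -> psum f N <= psum g N.
Proof.
  induction N as [|N IH]; intros Hfg; simpl; [lra|].
  pose proof (Hfg N (Nat.lt_succ_diag_r N)).
  assert (psum f N <= psum g N) by (apply IH; intros n Hn; apply Hfg; lia).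
  lra.
Qed.

Lemma psum_minus (f g : nat -> R) (N : nat) :
  psum (fun n => f n - g n) N = psum f N - psum g N.
Proof. induction N as [|N IH]; simpl; [ring|]. rewrite IH. ring. Qed.

Lemma psum_scal (c : R) (f : nat -> R) (N : nat) :
  psum (fun n => c * f n) N = c * psum f N.
Proof. induction N as [|N IH]; simpl; [ring|]. rewrite IH. ring. Qed.

Lemma psum_le_psum (f : nat -> R) (m N : nat) :
  (forall n, (n < N)%nat -> 0 <= f n) -> (m <= N)%nat -> psum f m <= psum f N.
Proof.
  intros Hf Hm. induction Hm as [|N Hm IH]; [lra|].
  simpl. pose proof (Hf N (Nat.lt_succ_diag_r N)).
  assert (psum f m <= psum f N) by (apply IH; intros n Hn; apply Hf; lia).
  lra.
Qed.

Lemma assumptionA_linear (L U D s : R) :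
  0 <= L -> L <= s <= U -> assumptionA_fun L U D (fun t => s * t).
Proof.
  intros HL Hs. split; [ring|]. split; [|split].
  - intros x y _ Hxy _. apply Rmult_le_compat_l; lra.
  - intros x y t _ _ _. lra.
  - intros x _. split; [auto_derive; trivial|].
    replace (Derive (fun t => s * t) x) with s; [lra|].
    symmetry. apply is_derive_unique. auto_derive; [trivial | ring].
Qed.

Lemma assumptionA_increment_le (L U D : R) (g : R -> R) (y z : R) :
  assumptionA_fun L U D g -> 0 <= y -> y <= z -> z <= D -> g z - g y <= U * (z - y).
Proof.
  intros [_ [_ [_ Hder]]] Hy Hyz HzD.
  destruct (MVT_gen g y z (Derive g)) as [c [Hc ->]];
    rewrite Rmin_left, Rmax_right in * by lra.
  - intros u Hu. apply Derive_correct, Hder. lra.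
  - intros u Hu. apply derivable_continuous_pt, ex_derive_Reals_0, Hder. lra.
  - apply Rmult_le_compat_r; [lra|]. apply Hder. lra.
Qed.

Lemma assumptionA_chord_le (L U D : R) (g : R -> R) (y z h : R) :
  assumptionA_fun L U D g -> 0 <= y -> y < z <= D -> 0 < h <= z - y ->
  h * (g z - g y) <= (z - y) * (g (y + h) - g y).
Proof.
  intros [_ [_ [Hconc _]]] Hy Hyz Hh.
  set (s := h / (z - y)).
  assert (Hsh : s * (z - y) = h) by (unfold s; field; lra).
  assert (Hs : 0 <= s <= 1).
  { split; [unfold s; apply Rlt_le, Rdiv_lt_0_compat; lra|].
    apply Rnot_lt_le. intros Hs1.
    assert (0 < (s - 1) * (z - y)) by (apply Rmult_lt_0_compat; lra). lra. }
  pose proof (Hconc z y s ltac:(lra) ltac:(lra) Hs) as Hc.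
  replace (s * z + (1 - s) * y) with (y + h) in Hc by lra.
  rewrite <- Hsh at 1.
  replace (s * (z - y) * (g z - g y)) with ((z - y) * (s * g z + (1 - s) * g y - g y))
    by ring.
  apply Rmult_le_compat_l; lra.
Qed.

Section PhiStar.

Variables C L U alpha : R.
Hypotheses (HC : 0 < C) (HLU : L < U) (Halpha : 0 < alpha).

Local Notation phi := (phi_star C L U alpha).

Definition phi_star_primitive (w : R) : R :=
  L * w + (U - L) * (C / alpha) * exp (alpha / C * w - alpha).

Local Notation Phi := phi_star_primitive.

Lemma phi_star_continuous (x : R) : continuous phi x.
Proof. apply (ex_derive_continuous phi). unfold phi_star. auto_derive. trivial. Qed.

Lemma RInt_phi_star (a b : R) : RInt phi a b = Phi b - Phi a.
Proof.
  apply is_RInt_unique, (is_RInt_derive Phi phi).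
  - intros t _. unfold Phi, phi_star. auto_derive; [trivial|]. unfold Rminus. field. lra.
  - intros t _. apply phi_star_continuous.
Qed.

Lemma RInt_phi_star_Chasles (a b c : R) :
  RInt phi a b + RInt phi b c = RInt phi a c.
Proof. rewrite !RInt_phi_star. ring. Qed.

Lemma phi_star_lt (x y : R) : x < y -> phi x < phi y.
Proof.
  intros Hxy. unfold phi_star.
  assert (exp (alpha / C * x - alpha) < exp (alpha / C * y - alpha)).
  { apply exp_increasing. assert (0 < alpha / C) by (apply Rdiv_lt_0_compat; lra). nra. }
  nra.
Qed.

Lemma phi_star_le (x y : R) : x <= y -> phi x <= phi y.
Proof.
  intros [Hlt|<-]; [apply Rlt_le, phi_star_lt; exact Hlt | apply Rle_refl].
Qed.

Lemma phi_star_gt_L (x : R) : L < phi x.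
Proof. unfold phi_star. pose proof (exp_pos (alpha / C * x - alpha)). nra. Qed.

Lemma phi_star_C : phi C = U.
Proof.
  unfold phi_star. replace (alpha / C * C - alpha) with 0 by (field; lra).
  rewrite exp_0. ring.
Qed.

Lemma RInt_phi_star_le (x h : R) : 0 <= h -> RInt phi x (x + h) <= h * phi (x + h).
Proof.
  intros [Hh|<-]; [|rewrite Rplus_0_r, RInt_point; unfold zero; simpl; lra].
  replace (h * phi (x + h)) with (RInt (fun _ => phi (x + h)) x (x + h))
    by (rewrite RInt_const; unfold scal; simpl; unfold mult; simpl; f_equal; ring).
  apply RInt_le; [lra | | apply ex_RInt_const |].
  - apply (ex_RInt_continuous phi). intros u _. apply phi_star_continuous.
  - intros u Hu. apply phi_star_le. lra.
Qed.

Lemma RInt_phi_star_gt (x h : R) : 0 < h -> h * phi x < RInt phi x (x + h).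
Proof.
  intros Hh.
  replace (h * phi x) with (RInt (fun _ => phi x) x (x + h))
    by (rewrite RInt_const; unfold scal; simpl; unfold mult; simpl; f_equal; ring).
  apply RInt_lt; [lra | intros u _; apply phi_star_continuous
                 | intros u _; apply continuous_const |].
  intros u Hu. apply phi_star_lt. lra.
Qed.

Lemma psum_RInt_phi_star (y : nat -> R) (N : nat) :
  psum (fun n => RInt phi (psum y n) (psum y n + y n)) N = RInt phi 0 (psum y N).
Proof.
  induction N as [|N IH]; simpl.
  - rewrite RInt_point. reflexivity.
  - rewrite IH. apply RInt_phi_star_Chasles.
Qed.

Section OnlineChoice.

Variables (D : R) (g : R -> R) (w y W : R).
Hypotheses (HA : assumptionA_fun L U D g) (Hy : 0 <= y <= D)
  (HyW : w + y <= W) (HWC : W <= C).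
Hypothesis Hopt : forall z, 0 <= z <= D -> w + z <= C ->
  g z - RInt phi w (w + z) <= g y - RInt phi w (w + y).

Lemma ota_choice_marginal_le (h : R) :
  0 <= h -> y + h <= D -> w + y + h <= C ->
  g (y + h) - g y <= h * phi (w + y + h).
Proof.
  intros Hh HhD HhC.
  pose proof (Hopt (y + h) ltac:(lra) ltac:(lra)) as Ho.
  rewrite <- (RInt_phi_star_Chasles w (w + y)) in Ho.
  replace (w + (y + h)) with (w + y + h) in Ho by ring.
  pose proof (RInt_phi_star_le (w + y) h Hh).
  lra.
Qed.

Lemma ota_choice_slope_le (z : R) : y < z <= D -> g z - g y <= phi (w + y) * (z - y).
Proof.
  intros Hz.
  destruct (Rle_lt_dec C (w + y)) as [Hfull|Hroom].
  - (* the knapsack is full, so optimality says nothing about larger choices;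
       the slope bound g' <= U = phi*(C) of Assumption A takes over *)
    replace (w + y) with C by lra. rewrite phi_star_C.
    apply (assumptionA_increment_le L U D); [exact HA | lra ..].
  - set (slope := (g z - g y) / (z - y)).
    assert (Hslope : g z - g y = slope * (z - y)) by (unfold slope; field; lra).
    rewrite Hslope. apply Rmult_le_compat_r; [lra|].
    apply (continuous_ge_of_right phi (w + y) _ (Rmin (z - y) (C - (w + y))));
      [apply phi_star_continuous | apply Rmin_glb_lt; lra |].
    intros t [Ht Hteps].
    pose proof (Rmin_l (z - y) (C - (w + y))). pose proof (Rmin_r (z - y) (C - (w + y))).
    pose proof (assumptionA_chord_le L U D g y z t HA ltac:(lra) Hz ltac:(lra)) as Hchord.
    pose proof (ota_choice_marginal_le t ltac:(lra) ltac:(lra) ltac:(lra)) as Hmarg.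
    rewrite Hslope in Hchord.
    apply (Rmult_le_reg_l (t * (z - y))); [nra|]. nra.
Qed.

Lemma ota_choice_dominates (z : R) : 0 <= z <= D ->
  g z - phi W * z <= g y - RInt phi w (w + y).
Proof.
  intros Hz.
  pose proof (RInt_phi_star_le w y ltac:(lra)).
  pose proof (phi_star_le (w + y) W HyW).
  destruct (Rle_lt_dec z y) as [Hzy|Hyz].
  - pose proof (Hopt z Hz ltac:(lra)).
    pose proof (RInt_phi_star_le w z ltac:(lra)).
    pose proof (phi_star_le (w + z) W ltac:(lra)).
    nra.
  - pose proof (ota_choice_slope_le z ltac:(lra)).
    nra.
Qed.

End OnlineChoice.

Lemma ota_run_total_le (N : nat) (D : nat -> R) (g : nat -> R -> R) (y : nat -> R) :
  ota_run C L U alpha N D g y -> psum y N <= C.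
Proof.
  intros Hrun. destruct N as [|N]; simpl; [lra|].
  apply (Hrun N (Nat.lt_succ_diag_r N)).
Qed.

Lemma ota_run_value_ge_RInt (N : nat) (D : nat -> R) (g : nat -> R -> R) (y : nat -> R) :
  valid_instance L U N D g -> ota_run C L U alpha N D g y ->
  RInt phi 0 (psum y N) <= psum (fun n => g n (y n)) N.
Proof.
  intros Hvalid Hrun. rewrite <- psum_RInt_phi_star. apply psum_le. intros n Hn.
  destruct (Hrun n Hn) as [[Hyn HynC] Hopt].
  destruct (Hvalid n Hn) as [_ [Hg0 _]].
  pose proof (Hopt 0 ltac:(lra) ltac:(lra)) as Hzero.
  rewrite Rplus_0_r, RInt_point, Hg0 in Hzero. unfold zero in Hzero; simpl in Hzero. lra.
Qed.

Section FixedPoint.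

Hypotheses (HL : 0 < L) (Halpha1 : 1 < alpha)
  (Hfix : alpha = ln ((U - L) / (alpha * L - L))).

Lemma fixed_point_exp : exp (- alpha) = (alpha * L - L) / (U - L).
Proof.
  assert (Hpos : 0 < alpha * L - L) by nra.
  assert (Hexp : exp alpha = (U - L) / (alpha * L - L)).
  { rewrite Hfix at 1. apply exp_ln, Rdiv_lt_0_compat; lra. }
  rewrite exp_Ropp, Hexp. field. lra.
Qed.

Lemma phi_star_0 : phi 0 = alpha * L.
Proof.
  unfold phi_star. replace (alpha / C * 0 - alpha) with (- alpha) by (field; lra).
  rewrite fixed_point_exp. field. lra.
Qed.

Lemma phi_star_balance (W : R) : C * phi W = alpha * (RInt phi 0 W + (C - W) * L).
Proof.
  rewrite RInt_phi_star. unfold Phi, phi_star.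
  replace (alpha / C * 0 - alpha) with (- alpha) by (field; lra).
  rewrite fixed_point_exp. field. lra.
Qed.

Lemma ota_upper_bound (N : nat) (D : nat -> R) (g : nat -> R -> R) (y x : nat -> R) :
  valid_instance L U N D g -> ota_run C L U alpha N D g y -> feasible C N D x ->
  payoff C L N g x <= alpha * payoff C L N g y.
Proof.
  intros Hvalid Hrun [HxC Hx].
  set (W := psum y N).
  assert (HWC : W <= C) by apply (ota_run_total_le N D g y Hrun).
  assert (Hy_nonneg : forall n, (n < N)%nat -> 0 <= y n)
    by (intros n Hn; apply (Hrun n Hn)).
  assert (Hdominates :
    psum (fun n => g n (x n) - phi W * x n) N
    <= psum (fun n => g n (y n) - RInt phi (psum y n) (psum y n + y n)) N).
  { apply psum_le. intros n Hn.
    destruct (Hrun n Hn) as [[Hyn _] Hopt].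
    apply (ota_choice_dominates (D n) (g n) (psum y n) (y n) W);
      [apply Hvalid, Hn | exact Hyn | | exact HWC | exact Hopt | apply Hx, Hn].
    apply (psum_le_psum y (S n) N Hy_nonneg Hn). }
  pose proof (ota_run_value_ge_RInt N D g y Hvalid Hrun) as Hgain. fold W in Hgain.
  rewrite psum_minus, psum_scal, psum_minus, psum_RInt_phi_star in Hdominates.
  fold W in Hdominates.
  pose proof (phi_star_balance W). pose proof (phi_star_gt_L W).
  unfold payoff. fold W.
  assert (0 <= (C - psum x N) * (phi W - L)) by (apply Rmult_le_pos; lra).
  assert (0 <= (alpha - 1) * (psum (fun n => g n (y n)) N - RInt phi 0 W))
    by (apply Rmult_le_pos; lra).
  nra.
Qed.

Lemma ota_run_single_linear (y : nat -> R) :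
  ota_run C L U alpha 1 (fun _ => C) (fun _ t => alpha * L * t) y <-> y 0%nat = 0.
Proof.
  assert (Hbuy : forall z, 0 < z -> alpha * L * z - RInt phi 0 (0 + z) < 0).
  { intros z Hz. pose proof (RInt_phi_star_gt 0 z Hz). rewrite phi_star_0 in *. lra. }
  split.
  - intros Hrun. destruct (Hrun 0%nat ltac:(lia)) as [[Hy _] Hopt]. simpl in Hy, Hopt.
    destruct (Req_dec (y 0%nat) 0) as [|Hne]; [assumption|exfalso].
    pose proof (Hopt 0 ltac:(lra) ltac:(lra)) as H0.
    rewrite Rplus_0_r, RInt_point in H0. unfold zero in H0; simpl in H0.
    pose proof (Hbuy (y 0%nat) ltac:(lra)). lra.
  - intros Hy0 n Hn. replace n with 0%nat by lia. simpl. rewrite Hy0.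
    split; [lra|]. intros z Hz _.
    rewrite Rplus_0_r, RInt_point. unfold zero; simpl.
    destruct (Req_dec z 0) as [->|Hz0]; [rewrite Rplus_0_r, RInt_point; unfold zero; simpl; lra|].
    pose proof (Hbuy z ltac:(lra)). lra.
Qed.

Lemma ota_lower_bound (beta : R) : beta < alpha ->
  exists N D g,
    valid_instance L U N D g /\
    (exists y, ota_run C L U alpha N D g y) /\
    forall y, ota_run C L U alpha N D g y ->
      exists x, feasible C N D x /\ beta * payoff C L N g y < payoff C L N g x.
Proof.
  intros Hbeta.
  exists 1%nat, (fun _ => C), (fun _ t => alpha * L * t). split; [|split].
  - intros n _. split; [exact HC|]. apply assumptionA_linear; [lra|].
    pose proof (phi_star_le 0 C ltac:(lra)) as Hrange.
    rewrite phi_star_0, phi_star_C in Hrange. split; nra.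
  - exists (fun _ => 0). apply ota_run_single_linear. reflexivity.
  - intros y Hrun. apply ota_run_single_linear in Hrun.
    exists (fun _ => C). split; [split; [simpl; lra | intros; lra]|].
    unfold payoff. simpl. rewrite Hrun.
    assert (0 < C * L) by nra. nra.
Qed.

End FixedPoint.

End PhiStar.

Theorem corollary1 (C L U alpha : R) :
  0 < C -> 0 < L -> L < U ->
  1 < alpha -> alpha = ln ((U - L) / (alpha * L - L)) ->
  ota_competitive_ratio_is C L U alpha alpha.
Proof.
  intros HC HL HLU Halpha Hfix.
  assert (Halpha0 : 0 < alpha) by lra.
  split.
  - intros N D g y x. apply ota_upper_bound; assumption.
  - intros beta. apply ota_lower_bound; assumption.
Qed.
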